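(* Let $\mathbb G$ be a special 2-group, $(n,\rho,\beta,c)$ and $(n',\rho',\beta',c')$ admissible quadruples, and $\mathcal O\subseteq M(n',n)$ an intertwining $\pi_0(\mathbb G)$-orbit. Then $z_{\mathcal O}\in Z^2(\pi_0(\mathbb G),\mathcal F(\mathcal O,\mathbb C^* )_{\rho,\rho'})$. Moreover, if $c$ and $c'$ are replaced by $\tilde c=c\,\partial x$ and $\tilde c'=c'\,\partial x'$ for normalized 1-cochains $x,x'$ (so that $\tilde c,\tilde c'$ have the same classes as $c,c'$ modulo coboundaries), the resulting cocycle $\tilde z_{\mathcal O}$ is cohomologous to $z_{\mathcal O}$; thus the cohomology class of $z_{\mathcal O}$ depends only on the classes of $c$ and $c'$ modulo coboundaries.
   Context: $\mathbb G$ special 2-group: skeletal monoidal groupoid with strictly invertible objects and trivial unit constraints; objects form the group $\pi_0(\mathbb G)$, $\pi_1(\mathbb G)=\mathrm{Aut}(e)$ is a $\pi_0(\mathbb G)$-module via $g\cdot u=\gamma_g^{-1}(\delta_g(u))$ ($\gamma_g(u)=u\otimes\mathrm{id}_g$, $\delta_g(u)=\mathrm{id}_g\otimes u$), canonical classifying 3-cocycle $\alpha(g_1,g_2,g_3)=\gamma^{-1}_{g_1g_2g_3}(a_{g_1,g_2,g_3})$. $S_n$ acts on $(\mathbb C^* )^n$ by $(\sigma\cdot\boldsymbol\lambda)_i=\lambda_{\sigma^{-1}(i)}$; $(\mathbb C^* )^n_\rho$ has $\pi_0(\mathbb G)$ acting through $\rho$. An admissible quadruple $(n,\rho,\beta,c)$: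 $n\ge1$, $\rho:\pi_0(\mathbb G)\to S_n$ a homomorphism, $\beta:\pi_1(\mathbb G)\to(\mathbb C^* )^n_\rho$ a module homomorphism with $[\beta\circ\alpha]=0$ in $H^3$, $c$ a normalized 2-cochain with values in $(\mathbb C^* )^n_\rho$ with $\partial c=\beta\circ\alpha$ (multiplicative notation, standard group-cochain coboundary). $M(n',n)=\{1,\dots,n'\}\times\{1,\dots,n\}$ with right action $(i',i)\cdot g=(\rho'(g)^{-1}(i'),\rho(g)^{-1}(i))$; $I(\beta,\beta')=\{(i',i):\beta'_{i'}=\beta_i\}$; an orbit $\mathcal O$ is intertwining if $\mathcal O\subseteq I(\beta,\beta')$. $\mathcal F(\mathcal O,\mathbb C^* )_{\rho,\rho'}$ is the multiplicative group of functions $\lambda:\mathcal O\to\mathbb C^*$ with $\pi_0(\mathbb G)$-module structure $(g\cdot\lambda)(p)=\lambda(p\cdot g)$. $z_{\mathcal O}(g_1,g_2)(i',i)=c'(g_1,g_2)_{i'}/c(g_1,g_2)_i$ for $(i',i)\in\mathcal O$. *)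

From HB Require Import structures.
From mathcomp Require Import all_boot all_order all_algebra all_fingroup.
From mathcomp Require Import complex Rstruct.
From Stdlib Require Import ClassicalEpsilon.

Set Implicit Arguments.
Unset Strict Implicit.
Unset Printing Implicit Defensive.
Import GRing.Theory.
Local Open Scope ring_scope.

Definition CC : fieldType := complex Rdefinitions.R.

(* A skeletal monoidal groupoid: objects form a group (strictly        *)
(* invertible objects, strict tensor on objects = group law); since it *)
(* is skeletal, every morphism is an automorphism of an object; we     *)
(* encode all morphisms in one type [Mor] with their (source = target) *)
(* object [src].  [mcomp f h] is the composite f o h (defined when     *)
(* src f = src h).  Unit constraints are trivial (identities).         *)
Record special2Group := Special2Group {
  Ob : Type;
  omul : Ob -> Ob -> Ob;
  oone : Ob;
  oinv : Ob -> Ob;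
  omulA : forall x y z, omul x (omul y z) = omul (omul x y) z;
  omul1o : forall x, omul oone x = x;
  omulo1 : forall x, omul x oone = x;
  omulVo : forall x, omul (oinv x) x = oone;
  omuloV : forall x, omul x (oinv x) = oone;
  Mor : Type;
  src : Mor -> Ob;
  mcomp : Mor -> Mor -> Mor;
  mid : Ob -> Mor;
  minv : Mor -> Mor;
  src_comp : forall f h, src f = src h -> src (mcomp f h) = src f;
  src_id : forall g, src (mid g) = g;
  src_inv : forall f, src (minv f) = src f;
  mcompA : forall f h k, src f = src h -> src h = src k ->
     mcomp f (mcomp h k) = mcomp (mcomp f h) k;
  mcomp1m : forall f, mcomp (mid (src f)) f = f;
  mcompm1 : forall f, mcomp f (mid (src f)) = f;
  mcompVm : forall f, mcomp (minv f) f = mid (src f);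
  mcompmV : forall f, mcomp f (minv f) = mid (src f);
  tens : Mor -> Mor -> Mor;
  src_tens : forall f h, src (tens f h) = omul (src f) (src h);
  tens_id : forall g h, tens (mid g) (mid h) = mid (omul g h);
  tens_comp : forall f f' h h', src f = src f' -> src h = src h' ->
     tens (mcomp f f') (mcomp h h') = mcomp (tens f h) (tens f' h');
  tens1m : forall f, tens (mid oone) f = f;
  tensm1 : forall f, tens f (mid oone) = f;
  assoc : Ob -> Ob -> Ob -> Mor;
  src_assoc : forall g1 g2 g3, src (assoc g1 g2 g3) = omul (omul g1 g2) g3;
  assoc_nat : forall f1 f2 f3,
     mcomp (assoc (src f1) (src f2) (src f3)) (tens (tens f1 f2) f3)
     = mcomp (tens f1 (tens f2 f3)) (assoc (src f1) (src f2) (src f3));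
  pentagon : forall g1 g2 g3 g4,
     mcomp (tens (mid g1) (assoc g2 g3 g4))
       (mcomp (assoc g1 (omul g2 g3) g4) (tens (assoc g1 g2 g3) (mid g4)))
     = mcomp (assoc g1 g2 (omul g3 g4)) (assoc (omul g1 g2) g3 g4);
  triangle : forall g h, assoc g oone h = mid (omul g h)
}.

Section TwoGroup.
Variable G : special2Group.
Local Notation Ob := (Ob G).
Local Notation Mor := (Mor G).
Local Notation "g1 ** g2" := (omul g1 g2) (at level 40, left associativity).

Definition in_pi1 (u : Mor) : Prop := src u = oone G.

Definition gamma (g : Ob) (u : Mor) : Mor := tens u (mid g).
Definition delta (g : Ob) (u : Mor) : Mor := tens (mid g) u.

(* gamma_g^{-1}(v): the (unique, since gamma_g : Aut(e) -> Aut(g) is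
   bijective) u in pi_1 with gamma_g(u) = v; chosen by classical choice. *)
Definition gammaInv (g : Ob) (v : Mor) : Mor :=
  match excluded_middle_informative (exists u, in_pi1 u /\ gamma g u = v) with
  | left ex => proj1_sig (constructive_indefinite_description _ ex)
  | right _ => mid (oone G)
  end.

Definition pi1_act (g : Ob) (u : Mor) : Mor := gammaInv g (delta g u).

(* canonical classifying 3-cocycle alpha = gamma^{-1}_{g1g2g3}(a_{g1,g2,g3}) *)
Definition alpha (g1 g2 g3 : Ob) : Mor :=
  gammaInv (g1 ** g2 ** g3) (assoc g1 g2 g3).

Variable n : nat.

Definition vec_act (rho : Ob -> {perm 'I_n}) (g : Ob) (v : 'I_n -> CC)
  : 'I_n -> CC := fun i => v (((rho g)^-1)%g i).

Definition is_perm_hom (rho : Ob -> {perm 'I_n}) : Prop :=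
  forall g h i, rho (g ** h) i = rho g (rho h i).

Definition is_module_hom (rho : Ob -> {perm 'I_n}) (beta : Mor -> 'I_n -> CC)
  : Prop :=
  [/\ forall u i, in_pi1 u -> beta u i != 0,
      forall u v i, in_pi1 u -> in_pi1 v -> beta (mcomp u v) i = beta u i * beta v i
    & forall g u i, in_pi1 u -> beta (pi1_act g u) i = vec_act rho g (beta u) i].

Definition cobound1 (rho : Ob -> {perm 'I_n}) (x : Ob -> 'I_n -> CC)
  (g1 g2 : Ob) : 'I_n -> CC :=
  fun i => vec_act rho g1 (x g2) i * (x (g1 ** g2) i)^-1 * x g1 i.

Definition cobound2 (rho : Ob -> {perm 'I_n}) (c : Ob -> Ob -> 'I_n -> CC)
  (g1 g2 g3 : Ob) : 'I_n -> CC :=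
  fun i => vec_act rho g1 (c g2 g3) i * (c (g1 ** g2) g3 i)^-1
           * c g1 (g2 ** g3) i * (c g1 g2 i)^-1.

Definition normalized_1cochain (x : Ob -> 'I_n -> CC) : Prop :=
  (forall g i, x g i != 0) /\ (forall i, x (oone G) i = 1).

Definition normalized_2cochain (c : Ob -> Ob -> 'I_n -> CC) : Prop :=
  [/\ forall g h i, c g h i != 0,
      forall g i, c (oone G) g i = 1 & forall g i, c g (oone G) i = 1].

Definition beta_alpha (beta : Mor -> 'I_n -> CC) (g1 g2 g3 : Ob) : 'I_n -> CC :=
  beta (alpha g1 g2 g3).

Definition admissible (rho : Ob -> {perm 'I_n}) (beta : Mor -> 'I_n -> CC)
  (c : Ob -> Ob -> 'I_n -> CC) : Prop :=
  [/\ (0 < n)%N /\ is_perm_hom rho, is_module_hom rho beta,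
      (* [beta o alpha] = 0 in H^3 *)
      (exists c0, normalized_2cochain c0 /\
         forall g1 g2 g3, cobound2 rho c0 g1 g2 g3 = beta_alpha beta g1 g2 g3),
      normalized_2cochain c
    & forall g1 g2 g3, cobound2 rho c g1 g2 g3 = beta_alpha beta g1 g2 g3].

End TwoGroup.

(* M(n',n) = 'I_n' x 'I_n with right action, orbits, and the module    *)
(* F(O, C^x)_{rho,rho'}.                                               *)
Section Orbits.
Variable G : special2Group.
Local Notation Ob := (Ob G).
Local Notation "g1 ** g2" := (omul g1 g2) (at level 40, left associativity).
Variables n n' : nat.
Variable rho : Ob -> {perm 'I_n}.
Variable rho' : Ob -> {perm 'I_n'}.

Definition Mact (p : 'I_n' * 'I_n) (g : Ob) : 'I_n' * 'I_n :=
  (((rho' g)^-1)%g p.1, ((rho g)^-1)%g p.2).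

Definition is_orbit (O : {set ('I_n' * 'I_n)}) : Prop :=
  exists p0, forall p, p \in O <-> exists g, p = Mact p0 g.

Definition intertwining (beta : Mor G -> 'I_n -> CC) (beta' : Mor G -> 'I_n' -> CC)
  (O : {set ('I_n' * 'I_n)}) : Prop :=
  forall p, p \in O -> forall u, in_pi1 u -> beta' u p.1 = beta u p.2.

(* elements of F(O, C^x) are functions on M(n',n) considered on O only;
   (g . lambda)(p) = lambda(p . g) *)
Definition F_act (g : Ob) (lam : 'I_n' * 'I_n -> CC) : 'I_n' * 'I_n -> CC :=
  fun p => lam (Mact p g).

Definition F_cobound1 (y : Ob -> 'I_n' * 'I_n -> CC) (g1 g2 : Ob)
  : 'I_n' * 'I_n -> CC :=
  fun p => F_act g1 (y g2) p * (y (g1 ** g2) p)^-1 * y g1 p.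

Definition F_cobound2 (z : Ob -> Ob -> 'I_n' * 'I_n -> CC) (g1 g2 g3 : Ob)
  : 'I_n' * 'I_n -> CC :=
  fun p => F_act g1 (z g2 g3) p * (z (g1 ** g2) g3 p)^-1
           * z g1 (g2 ** g3) p * (z g1 g2 p)^-1.

Definition Z2F (O : {set ('I_n' * 'I_n)}) (z : Ob -> Ob -> 'I_n' * 'I_n -> CC)
  : Prop :=
  (forall g1 g2 p, p \in O -> z g1 g2 p != 0) /\
  (forall g1 g2 g3 p, p \in O -> F_cobound2 z g1 g2 g3 p = 1).

Definition cohomologousF (O : {set ('I_n' * 'I_n)})
  (z1 z2 : Ob -> Ob -> 'I_n' * 'I_n -> CC) : Prop :=
  exists y : Ob -> 'I_n' * 'I_n -> CC,
    (forall g p, p \in O -> y g p != 0) /\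
    (forall g1 g2 p, p \in O -> z1 g1 g2 p = z2 g1 g2 p * F_cobound1 y g1 g2 p).

End Orbits.

Definition zO (G : special2Group) (n n' : nat)
  (c : Ob G -> Ob G -> 'I_n -> CC) (c' : Ob G -> Ob G -> 'I_n' -> CC)
  (g1 g2 : Ob G) (p : 'I_n' * 'I_n) : CC :=
  c' g1 g2 p.1 / c g1 g2 p.2.

Definition twist (G : special2Group) (n : nat) (rho : Ob G -> {perm 'I_n})
  (c : Ob G -> Ob G -> 'I_n -> CC) (x : Ob G -> 'I_n -> CC)
  (g1 g2 : Ob G) (i : 'I_n) : CC :=
  c g1 g2 i * cobound1 rho x g1 g2 i.

From mathcomp Require Import all_boot all_order all_algebra all_fingroup.
From mathcomp Require Import complex Rstruct.
From mathcomp Require Import ring.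
From Stdlib Require Import ClassicalEpsilon.
Local Open Scope ring_scope.
Import GRing.Theory.

(* The coboundary of z_O at (i', i) is d c'(i') / d c(i) = beta' alpha (i') / beta alpha (i),
   which is 1 because the orbit is intertwining.  Twisting c and c' by d x and d x'
   multiplies z_O by the coboundary of the 1-cochain (i', i) |-> x'(i') / x(i), and
   cocycles are stable under such multiplication since d d = 1 on an orbit. *)

Lemma gammaInv_pi1 {G : special2Group} g v : in_pi1 (@gammaInv G g v).
Proof.
rewrite /gammaInv; case: excluded_middle_informative => [ex|_]; last exact: src_id.
by case: (constructive_indefinite_description _ ex) => u [].
Qed.

Lemma alpha_pi1 {G : special2Group} g1 g2 g3 : in_pi1 (@alpha G g1 g2 g3).
Proof. exact: gammaInv_pi1. Qed.

Section OrbitCohomology.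
Context {G : special2Group}.
Local Notation Ob := (Ob G).
Local Notation "g1 ** g2" := (omul g1 g2) (at level 40, left associativity).
Context {n n' : nat} {rho : Ob -> {perm 'I_n}} {rho' : Ob -> {perm 'I_n'}}.
Local Notation Mact := (Mact rho rho').
Local Notation F_cobound1 := (F_cobound1 rho rho').
Local Notation F_cobound2 := (F_cobound2 rho rho').

(* Since (a b)^-1 = a^-1 b^-1 in any field, even at 0, these identities need
   no nonvanishing hypotheses. *)
Lemma F_cobound2_zO (c : Ob -> Ob -> 'I_n -> CC) (c' : Ob -> Ob -> 'I_n' -> CC)
    g1 g2 g3 p :
  F_cobound2 (zO c c') g1 g2 g3 p
  = cobound2 rho' c' g1 g2 g3 p.1 / cobound2 rho c g1 g2 g3 p.2.
Proof. by rewrite /F_cobound2 /cobound2 /F_act /zO /vec_act /= !invfM !invrK; ring. Qed.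

Lemma F_cobound2M (z w : Ob -> Ob -> 'I_n' * 'I_n -> CC) g1 g2 g3 p :
  F_cobound2 (fun h1 h2 q => z h1 h2 q * w h1 h2 q) g1 g2 g3 p
  = F_cobound2 z g1 g2 g3 p * F_cobound2 w g1 g2 g3 p.
Proof. by rewrite /F_cobound2 /F_act !invfM; ring. Qed.

Lemma zO_twist (c : Ob -> Ob -> 'I_n -> CC) (c' : Ob -> Ob -> 'I_n' -> CC)
    (x : Ob -> 'I_n -> CC) (x' : Ob -> 'I_n' -> CC) g1 g2 p :
  zO (twist rho c x) (twist rho' c' x') g1 g2 p
  = zO c c' g1 g2 p * F_cobound1 (fun g q => x' g q.1 / x g q.2) g1 g2 p.
Proof.
by rewrite /zO /twist /cobound1 /F_cobound1 /F_act /vec_act /Mact /= !invfM !invrK; ring.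
Qed.

Lemma invperm_hom {m} {sigma : Ob -> {perm 'I_m}} :
  is_perm_hom sigma -> forall g1 g2 i,
  ((sigma (g1 ** g2))^-1)%g i = ((sigma g2)^-1)%g (((sigma g1)^-1)%g i).
Proof.
move=> hom g1 g2 i; apply: (@perm_inj _ (sigma (g1 ** g2))).
by rewrite permKV hom !permKV.
Qed.

Hypothesis rho_hom : is_perm_hom rho.
Hypothesis rho'_hom : is_perm_hom rho'.

Lemma MactM p g1 g2 : Mact p (g1 ** g2) = Mact (Mact p g1) g2.
Proof. by rewrite /Mact /= (invperm_hom rho_hom) (invperm_hom rho'_hom). Qed.

Context {O : {set 'I_n' * 'I_n}}.
Hypothesis O_orbit : is_orbit rho rho' O.

Lemma orbit_Mact g {p} : p \in O -> Mact p g \in O.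
Proof.
case: O_orbit => p0 inO /inO [h ->]; apply/inO.
by exists (h ** g); rewrite MactM.
Qed.

Lemma eq_F_cobound2 {z w : Ob -> Ob -> 'I_n' * 'I_n -> CC} :
  (forall h1 h2 q, q \in O -> z h1 h2 q = w h1 h2 q) ->
  forall g1 g2 g3 p, p \in O -> F_cobound2 z g1 g2 g3 p = F_cobound2 w g1 g2 g3 p.
Proof. by move=> zw g1 g2 g3 p pO; rewrite /F_cobound2 /F_act !zw ?orbit_Mact. Qed.

Lemma F_cobound1_neq0 (y : Ob -> 'I_n' * 'I_n -> CC) g1 g2 p :
  (forall g q, q \in O -> y g q != 0) -> p \in O -> F_cobound1 y g1 g2 p != 0.
Proof.
by move=> y0 pO; rewrite /F_cobound1 /F_act !mulf_neq0 ?invr_eq0 ?y0 ?orbit_Mact.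
Qed.

Lemma F_cobound2_cobound1 (y : Ob -> 'I_n' * 'I_n -> CC) g1 g2 g3 p :
  (forall g q, q \in O -> y g q != 0) -> p \in O ->
  F_cobound2 (F_cobound1 y) g1 g2 g3 p = 1.
Proof.
move=> y0 pO; have pg1O := orbit_Mact g1 pO; have pg12O := orbit_Mact g2 pg1O.
rewrite /F_cobound2 /F_cobound1 /F_act !MactM -!omulA !invfM !invrK.
by field; rewrite ?y0.
Qed.

Lemma Z2F_cohomologous {z1 z2 : Ob -> Ob -> 'I_n' * 'I_n -> CC} :
  cohomologousF rho rho' O z1 z2 -> Z2F rho rho' O z2 -> Z2F rho rho' O z1.
Proof.
case=> y [y0 z12] [z2_0 z2_cocycle]; split=> [g1 g2 p pO|g1 g2 g3 p pO].
  by rewrite z12 // mulf_neq0 ?z2_0 ?F_cobound1_neq0.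
rewrite (eq_F_cobound2 z12) // F_cobound2M.
by rewrite z2_cocycle // F_cobound2_cobound1 // mulr1.
Qed.

End OrbitCohomology.

Lemma zO_cocycle {G : special2Group} {n n' : nat}
  {rho : Ob G -> {perm 'I_n}} {beta : Mor G -> 'I_n -> CC}
  {c : Ob G -> Ob G -> 'I_n -> CC}
  {rho' : Ob G -> {perm 'I_n'}} {beta' : Mor G -> 'I_n' -> CC}
  {c' : Ob G -> Ob G -> 'I_n' -> CC} {O : {set ('I_n' * 'I_n)}} :
  admissible rho beta c -> admissible rho' beta' c' ->
  intertwining beta beta' O -> Z2F rho rho' O (zO c c').
Proof.
move=> [_ [beta0 _ _] _ [c0 _ _] dc] [_ _ _ [c'0 _ _] dc'] inter.
split=> [g1 g2 p _|g1 g2 g3 p pO]; first by rewrite mulf_neq0 ?invr_eq0.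
rewrite F_cobound2_zO dc dc' /beta_alpha (inter p pO _ (alpha_pi1 _ _ _)).
by rewrite divff // beta0 //; exact: alpha_pi1.
Qed.

Lemma zO_twist_cohomologous {G : special2Group} {n n' : nat}
  (rho : Ob G -> {perm 'I_n}) (c : Ob G -> Ob G -> 'I_n -> CC)
  (rho' : Ob G -> {perm 'I_n'}) (c' : Ob G -> Ob G -> 'I_n' -> CC)
  (O : {set ('I_n' * 'I_n)}) {x : Ob G -> 'I_n -> CC} {x' : Ob G -> 'I_n' -> CC} :
  normalized_1cochain x -> normalized_1cochain x' ->
  cohomologousF rho rho' O (zO (twist rho c x) (twist rho' c' x')) (zO c c').
Proof.
move=> [x0 _] [x'0 _]; exists (fun g q => x' g q.1 / x g q.2).
by split=> [g q _|g1 g2 p _]; rewrite ?zO_twist // mulf_neq0 ?invr_eq0.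
Qed.

Theorem mainTheorem9 (G : special2Group) (n n' : nat)
  (rho : Ob G -> {perm 'I_n}) (beta : Mor G -> 'I_n -> CC)
  (c : Ob G -> Ob G -> 'I_n -> CC)
  (rho' : Ob G -> {perm 'I_n'}) (beta' : Mor G -> 'I_n' -> CC)
  (c' : Ob G -> Ob G -> 'I_n' -> CC)
  (O : {set ('I_n' * 'I_n)}) :
  admissible rho beta c ->
  admissible rho' beta' c' ->
  is_orbit rho rho' O ->
  intertwining beta beta' O ->
  Z2F rho rho' O (zO c c') /\
  (forall (x : Ob G -> 'I_n -> CC) (x' : Ob G -> 'I_n' -> CC),
     normalized_1cochain x -> normalized_1cochain x' ->
     Z2F rho rho' O (zO (twist rho c x) (twist rho' c' x')) /\
     cohomologousF rho rho' O (zO (twist rho c x) (twist rho' c' x')) (zO c c')).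
Proof.
move=> adm adm' orbO inter.
have cocycle := zO_cocycle adm adm' inter.
case: adm adm' => [[_ hom] _ _ _ _] [[_ hom'] _ _ _ _].
split=> // x x' x1 x'1.
have coh := zO_twist_cohomologous rho c rho' c' O x1 x'1.
by split=> //; exact: (Z2F_cohomologous hom hom' orbO coh cocycle).
Qed.
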